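(* The category $\mathbb S^{\mathrm{m},\mathbb P}_r$ is a traced symmetric monoidal category.
   Context: Notation: $[k]=\{1,\dots,k\}$; $T(X)=X+\mathbb R\times X+\{\exists^*,\forall^*\}$; diagrammatic composition. $\mathbb S^{\mathrm{m},\mathbb P}_r$ (meager semantic category for plays) has natural numbers as objects; an arrow $f:m\to n$ is a function $f:[m]\to T([n])$ satisfying realizability: for all $i\ne j$ in $[m]$, $f(i)\notin[n]$ or $f(j)\notin\{f(i)\}\cup\mathbb R\times\{f(i)\}$. Its hom-sets are ordered pointwise by the least order $\le$ on $T([n])$ with $(r_1,i)\le(r_2,i)$ whenever $r_1\ge r_2$, $\exists^*\le z$ and $z\le\forall^*$ for all $z$. Its operations are: composition of $f:m\to l$, $g:l\to n$: $(f;g)(i)=f(i)$ if $f(i)\in\{\exists^*,\forall^*\}$; $g(j)$ if $f(i)=j\in[l]$; $g(j)$ if $f(i)=(r,j)$ and $g(j)\in\{\exists^*,\forall^*\}$; $(r,k)$ if $f(i)=(r,j)$, $g(j)=k$; $(r+r',k)$ if $f(i)=(r,j)$, $g(j)=(r',k)$. $\mathrm{id}(i)=i$; $\sigma_{m,n}(i)=n+i$ ($i\le m$), $\sigma_{m,n}(m+j)=j$; $(f\oplus g)(i)=f(i)$ ($i\le m$), $(f\oplus g)(m+i)$ is $g(i)$ with its index $j$ (if any) shifted to $n+j$ (for $f:m\to n$). Trace of $f:l+m\to l+n$ at $i\in[m]$: $v_0=l+i$; if $j=0$ or $v_j\in[l]$ then $v_{j+1}=f(v_j)$; if $v_j=(r,k)$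 with $k\in[l]$ then $v_{j+1}=f(k)$; otherwise stop at $v_j$. If finite $(v_0,..,v_K)$ and $S$ is the sum of first components of $v_j\in\mathbb R\times[l+n]$, $1\le j\le K$: value $v_K$ if $v_K\in\{\exists^*,\forall^*\}$; $k$ if $v_K=l+k$ and $v_j\in[l]$ for $1\le j<K$; $(S,k)$ if $v_K=l+k$ and some earlier $v_j\in\mathbb R\times[l]$; $(S,k)$ if $v_K=(r,l+k)$. If infinite, with $w'_1,w'_2,..$ the first components of the (infinitely many) entries in $\mathbb R\times[l]$: $\exists^*$ if $\liminf_N\frac1N\sum_{t\le N}w'_t\ge0$, else $\forall^*$. *)

From mathcomp Require Import ssreflect ssrfun ssrbool eqtype ssrnat.
From Stdlib Require Import Reals ClassicalEpsilon.
From Coquelicot Require Import Rbar Lim_seq.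

Set Implicit Arguments.
Unset Strict Implicit.
Unset Printing Implicit Defensive.
Local Open Scope nat_scope.

(* T(X) = X + R x X + {exists*, forall*}, with X = [n] = {1,..,n} encoded by *)
(* natural numbers (1-based, as in the paper).                              *)
Inductive Tv : Type :=
| Ix of nat
| Wt of R & nat
| ExS
| FaS.

Definition in_range (n k : nat) : bool := (0 < k <= n).

Definition wf_T (n : nat) (v : Tv) : Prop :=
  match v with
  | Ix k => in_range n k
  | Wt _ k => in_range n k
  | _ => True
  end.

(* An arrow m -> n of S^{m,P}_r is a function [m] -> T([n]); we represent it *)
(* by any f : nat -> Tv, only its values on [m] = {1..m} being relevant.     *)
Definition realizable (m : nat) (f : nat -> Tv) : Prop :=
  forall i j, in_range m i -> in_range m j -> i <> j ->
    forall k, f i = Ix k -> (f j <> Ix k /\ forall r, f j <> Wt r k).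

Definition is_arrow (m n : nat) (f : nat -> Tv) : Prop :=
  (forall i, in_range m i -> wf_T n (f i)) /\ realizable m f.

Definition eq_arrow (m : nat) (f g : nat -> Tv) : Prop :=
  forall i, in_range m i -> f i = g i.

Definition compS (f g : nat -> Tv) : nat -> Tv := fun i =>
  match f i with
  | ExS => ExS
  | FaS => FaS
  | Ix j => g j
  | Wt r j =>
      match g j with
      | ExS => ExS
      | FaS => FaS
      | Ix k => Wt r k
      | Wt r' k => Wt (r + r')%R k
      end
  end.

Definition idS (m : nat) : nat -> Tv := fun i => Ix i.

Definition sigmaS (m n : nat) : nat -> Tv := fun i =>
  if i <= m then Ix (n + i) else Ix (i - m).

Definition shiftT (n : nat) (v : Tv) : Tv :=
  match v with
  | Ix j => Ix (n + j)
  | Wt r j => Wt r (n + j)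
  | ExS => ExS
  | FaS => FaS
  end.

(* tensor f (+) g, for f : m -> n (and g : m' -> n') *)
Definition tensorS (m n : nat) (f g : nat -> Tv) : nat -> Tv := fun i =>
  if i <= m then f i else shiftT n (g (i - m)).

(* Trace of f : l + m -> l + n at i in [m].                                 *)
Section Trace.
Variables (l n : nat) (f : nat -> Tv) (i : nat).

Definition tr_cont (j : nat) (v : Tv) : bool :=
  (j == 0) ||
  match v with
  | Ix k => in_range l k
  | Wt _ k => in_range l k
  | _ => false
  end.

Fixpoint tr_walk (j : nat) : Tv :=
  match j with
  | 0 => Ix (l + i)
  | S j' =>
      let v := tr_walk j' in
      if tr_cont j' v then
        match v with
        | Ix k => f k
        | Wt _ k => f k
        | _ => v
        end
      else v
  end.

Definition tr_stop (j : nat) : bool := ~~ tr_cont j (tr_walk j).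

Definition tr_wl (j : nat) : bool :=
  match tr_walk j with
  | Wt _ k => in_range l k
  | _ => false
  end.

Definition weight (v : Tv) : R := match v with Wt r _ => r | _ => 0%R end.

Fixpoint psum (a : nat -> R) (K : nat) : R :=
  match K with 0 => 0%R | S K' => (psum a K' + a K)%R end.

Fixpoint has_wl_before (K : nat) : bool :=
  match K with 0 => false | S K' => has_wl_before K' || ((0 < K') && tr_wl K') end.

Definition tr_fin_value (K : nat) : Tv :=
  let S := psum (fun j => weight (tr_walk j)) K in
  match tr_walk K with
  | ExS => ExS
  | FaS => FaS
  | Ix k => if has_wl_before K then Wt S (k - l) else Ix (k - l)
  | Wt _ k => Wt S (k - l)
  end.

(* least j >= a with v_j in R x [l] (0 if none: not used for realizable f) *)
Definition next_wl (a : nat) : nat :=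
  match excluded_middle_informative (exists j, (a <= j) && tr_wl j) with
  | left H => ex_minn H
  | right _ => 0
  end.

(* positions p_1 < p_2 < ... of the entries in R x [l] (0-indexed here) *)
Fixpoint wl_pos (t : nat) : nat :=
  match t with
  | 0 => next_wl 1
  | S t' => next_wl (wl_pos t').+1
  end.

Definition wprime (t : nat) : R := weight (tr_walk (wl_pos t)).

Fixpoint wsum (N : nat) : R :=
  match N with 0 => 0%R | S N' => (wsum N' + wprime N')%R end.

(* (1/N) sum_{t <= N} w'_t, indexed by N-1 *)
Definition wavg (N : nat) : R := (wsum N.+1 / INR N.+1)%R.

Definition tr_inf_value : Tv :=
  match excluded_middle_informative (Rbar_le (Finite 0%R) (LimInf_seq wavg)) with
  | left _ => ExS
  | right _ => FaS
  end.

Definition trace_at : Tv :=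
  match excluded_middle_informative (exists K, tr_stop K) with
  | left H => tr_fin_value (ex_minn H)
  | right _ => tr_inf_value
  end.

End Trace.

(* Tr^l(f) : m -> n for f : l + m -> l + n *)
Definition trS (l n : nat) (f : nat -> Tv) : nat -> Tv := fun i => trace_at l f i.

(* Strict traced symmetric monoidal category with objects nat, tensor on   *)
(* objects m (+) n = m + n and unit 0 (associators/unitors are identities), *)
(* tensor m n f g : f (+) g  where f : m -> n;  tr l n f : Tr^l(f) where    *)
(* f : l + m -> l + n.  Trace axioms: Joyal-Street-Verity.                  *)
Record is_traced_smc (A : Type)
    (arrow : nat -> nat -> A -> Prop) (eqA : nat -> A -> A -> Prop)
    (id : nat -> A) (comp : A -> A -> A)
    (tensor : nat -> nat -> A -> A -> A) (sigma : nat -> nat -> A)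
    (tr : nat -> nat -> A -> A) : Prop := {
  eqA_refl : forall m f, eqA m f f;
  eqA_sym : forall m f g, eqA m f g -> eqA m g f;
  eqA_trans : forall m f g h, eqA m f g -> eqA m g h -> eqA m f h;
  arrow_eqA : forall m n f g, arrow m n f -> eqA m f g -> arrow m n g;
  id_arrow : forall m, arrow m m (id m);
  comp_arrow : forall m l n f g, arrow m l f -> arrow l n g -> arrow m n (comp f g);
  comp_eqA : forall m l n f f' g g', arrow m l f -> arrow l n g ->
      eqA m f f' -> eqA l g g' -> eqA m (comp f g) (comp f' g');
  comp_id_l : forall m n f, arrow m n f -> eqA m (comp (id m) f) f;
  comp_id_r : forall m n f, arrow m n f -> eqA m (comp f (id n)) f;
  comp_assoc : forall m l k n f g h, arrow m l f -> arrow l k g -> arrow k n h ->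
      eqA m (comp (comp f g) h) (comp f (comp g h));
  tensor_arrow : forall m n m' n' f g, arrow m n f -> arrow m' n' g ->
      arrow (m + m') (n + n') (tensor m n f g);
  tensor_eqA : forall m n m' n' f f' g g', arrow m n f -> arrow m' n' g ->
      eqA m f f' -> eqA m' g g' -> eqA (m + m') (tensor m n f g) (tensor m n f' g');
  tensor_id : forall m m', eqA (m + m') (tensor m m (id m) (id m')) (id (m + m'));
  tensor_comp : forall m l n m' l' n' f g f' g',
      arrow m l f -> arrow l n g -> arrow m' l' f' -> arrow l' n' g' ->
      eqA (m + m') (tensor m n (comp f g) (comp f' g'))
                   (comp (tensor m l f f') (tensor l n g g'));
  tensor_assoc : forall m n m' n' m'' n'' f g h,
      arrow m n f -> arrow m' n' g -> arrow m'' n'' h ->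
      eqA (m + m' + m'') (tensor (m + m') (n + n') (tensor m n f g) h)
                         (tensor m n f (tensor m' n' g h));
  tensor_unit_l : forall m n f, arrow m n f -> eqA m (tensor 0 0 (id 0) f) f;
  tensor_unit_r : forall m n f, arrow m n f -> eqA m (tensor m n f (id 0)) f;
  sigma_arrow : forall m n, arrow (m + n) (n + m) (sigma m n);
  sigma_natural : forall m n m' n' f g, arrow m n f -> arrow m' n' g ->
      eqA (m + m') (comp (tensor m n f g) (sigma n n'))
                   (comp (sigma m m') (tensor m' n' g f));
  sigma_invol : forall m n, eqA (m + n) (comp (sigma m n) (sigma n m)) (id (m + n));
  sigma_hexagon : forall m n p,
      eqA (m + n + p) (sigma m (n + p))
          (comp (tensor (m + n) (n + m) (sigma m n) (id p))
                (tensor n n (id n) (sigma m p)));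
  tr_arrow : forall l m n f, arrow (l + m) (l + n) f -> arrow m n (tr l n f);
  tr_eqA : forall l m n f f', arrow (l + m) (l + n) f -> eqA (l + m) f f' ->
      eqA m (tr l n f) (tr l n f');
  tr_natural : forall l m n m' n' f g h,
      arrow (l + m) (l + n) f -> arrow m' m g -> arrow n n' h ->
      eqA m' (tr l n' (comp (comp (tensor l l (id l) g) f) (tensor l l (id l) h)))
             (comp (comp g (tr l n f)) h);
  tr_dinatural : forall l l' m n f k,
      arrow (l + m) (l' + n) f -> arrow l' l k ->
      eqA m (tr l n (comp f (tensor l' l k (id n))))
            (tr l' n (comp (tensor l' l k (id m)) f));
  tr_vanish0 : forall m n f, arrow m n f -> eqA m (tr 0 n f) f;
  tr_vanish2 : forall l l' m n f, arrow (l + l' + m) (l + l' + n) f ->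
      eqA m (tr (l + l') n f) (tr l' n (tr l (l' + n) f));
  tr_superpose : forall l m n m' n' f g,
      arrow (l + m) (l + n) f -> arrow m' n' g ->
      eqA (m + m') (tensor m n (tr l n f) g)
                   (tr l (n + n') (tensor (l + m) (l + n) f g));
  tr_yanking : forall l, eqA l (tr l l (sigma l l)) (id l)
}.

(* Arrows are Kleisli maps for the monad T(X) = X + R * X + {exists*, forall*} (weights add up
   along composition, verdicts absorb), so the category and symmetric monoidal laws are the
   monad laws of [bindT] plus index arithmetic.

   The trace of f : l + m -> l + n at i follows the walk from wire l + i through f as long as it
   stays on the feedback wires [[l]]. If the walk leaves them, the trace is the exit point with
   the accumulated weight. Otherwise the walk is eventually periodic on the finitely many
   feedback wires, so its running weight is either bounded below or decreases linearly, and the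
   liminf criterion of the definition holds exactly when the running weight is bounded below.
   Realizability enters twice: pure edges can be followed backwards uniquely, so an infinite walk
   entering from outside cannot end in a weightless cycle (the liminf is then taken over
   infinitely many weights), and two walks with the same pure exit have the same start (traces
   are realizable). Each trace axiom compares two walks step by step: they exit together with
   the same value, or both loop with running weights that are bounded below together. *)

From mathcomp Require Import ssreflect ssrfun ssrbool eqtype ssrnat seq div.
From mathcomp Require Import zify.
From Stdlib Require Import Reals Lra ClassicalEpsilon FunctionalExtensionality.
From Coquelicot Require Import Rbar Lim_seq.
Set Implicit Arguments. Unset Strict Implicit. Unset Printing Implicit Defensive.
Local Open Scope nat_scope.

Ltac in_range_lia := unfold in_range in *; lia.

(** * Kleisli structure of T *)

Definition bindT (e : Tv) (g : nat -> Tv) : Tv :=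
  match e with
  | ExS => ExS
  | FaS => FaS
  | Ix j => g j
  | Wt r j =>
      match g j with
      | ExS => ExS
      | FaS => FaS
      | Ix k => Wt r k
      | Wt r' k => Wt (r + r')%R k
      end
  end.

Lemma compSE f g i : compS f g i = bindT (f i) g.
Proof. by []. Qed.

Definition idx (e : Tv) : nat := match e with Ix k | Wt _ k => k | _ => 0 end.
Definition is_verdict (e : Tv) : bool := if e is (ExS | FaS) then true else false.
Definition is_weighted (e : Tv) : bool := if e is Wt _ _ then true else false.

Lemma bindTA e g h : bindT (bindT e g) h = bindT e (fun j => bindT (g j) h).
Proof.
case: e => [j|r j||] //=; case: (g j) => [k|r' k||] //=; case: (h k) => //= r'' k'.
by rewrite Rplus_assoc.
Qed.

Lemma bindT_Ix e : bindT e Ix = e.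
Proof. by case: e. Qed.

Lemma eq_bindT e g g' : (~~ is_verdict e -> g (idx e) = g' (idx e)) ->
  bindT e g = bindT e g'.
Proof. by case: e => [j|r j||] //= ->. Qed.

Lemma bindT_id e g : (~~ is_verdict e -> g (idx e) = Ix (idx e)) -> bindT e g = e.
Proof. by move=> H; rewrite (eq_bindT (g' := Ix)) ?bindT_Ix. Qed.

Lemma bindT_verdict e g : is_verdict e -> bindT e g = e.
Proof. by case: e. Qed.

Lemma bindT_const e c : is_verdict c -> ~~ is_verdict e -> bindT e (fun=> c) = c.
Proof. by case: e => [j|r j||] //=; case: c. Qed.

Lemma is_verdict_bindT e g : is_verdict (bindT e g) = is_verdict e || is_verdict (g (idx e)).
Proof. by case: e => [j|r j||] //=; case: (g j). Qed.

Lemma idx_bindT e g : ~~ is_verdict e -> idx (bindT e g) = idx (g (idx e)).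
Proof. by case: e => [j|r j||] //=; case: (g j). Qed.

Lemma weight_bindT e g : ~~ is_verdict (bindT e g) ->
  weight (bindT e g) = (weight e + weight (g (idx e)))%R.
Proof. by case: e => [j|r j||] //=; case: (g j) => [k|r' k||] //= _; lra. Qed.

Lemma bindT_IxP e g k : bindT e g = Ix k -> e = Ix (idx e) /\ g (idx e) = Ix k.
Proof. by case: e => [j|r j||] //=; case: (g j). Qed.

Lemma shiftT_verdict n e : is_verdict (shiftT n e) = is_verdict e.
Proof. by case: e. Qed.

Lemma idx_shiftT n e : ~~ is_verdict e -> idx (shiftT n e) = n + idx e.
Proof. by case: e. Qed.

Lemma shiftT_bindT n e g : shiftT n (bindT e g) = bindT e (fun j => shiftT n (g j)).
Proof. by case: e => [j|r j||] //=; case: (g j). Qed.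

Lemma bindT_shiftT n e g : bindT (shiftT n e) g = bindT e (fun j => g (n + j)).
Proof. by case: e. Qed.

Lemma bindT_Ix_shift n e : bindT e (fun j => Ix (n + j)) = shiftT n e.
Proof. by case: e. Qed.

Lemma weight_shiftT n e : weight (shiftT n e) = weight e.
Proof. by case: e. Qed.

Lemma shiftTD a b e : shiftT (a + b) e = shiftT a (shiftT b e).
Proof. by case: e => [j|r j||] //=; rewrite addnA. Qed.

Lemma shiftT0 e : shiftT 0 e = e.
Proof. by case: e. Qed.

Lemma in_range_widen L M y : L <= M -> in_range L y -> in_range M y.
Proof. by rewrite /in_range => LM /andP[-> /leq_trans->]. Qed.

Lemma in_range_idx N e : wf_T N e -> ~~ is_verdict e -> in_range N (idx e).
Proof. by case: e. Qed.

Lemma wf_bindT K N e g : wf_T K e -> (forall j, in_range K j -> wf_T N (g j)) ->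
  wf_T N (bindT e g).
Proof. by case: e => [j|r j||] //= /[swap] /[apply]; case: (g j). Qed.

Lemma realizable_inj M f x y k : realizable M f -> in_range M x -> in_range M y ->
  f x = Ix k -> ~~ is_verdict (f y) -> idx (f y) = k -> x = y.
Proof.
move=> Hr hx hy fx; case: (eqVneq x y) => // /eqP xy.
have [h1 h2] := Hr x y hx hy xy k fx.
by case: (f y) h1 h2 => [k'|r k'||] //= h1 h2 _ ek; subst k; [case: h1 | case: (h2 r)].
Qed.

Lemma realizable_of m f :
  (forall i j k, in_range m i -> in_range m j -> f i = Ix k ->
     ~~ is_verdict (f j) -> idx (f j) = k -> i = j) ->
  realizable m f.
Proof.
by move=> H i j hi hj ij k fi; split=> [|r] fj; apply: ij; apply: (H i j k); rewrite ?fj.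
Qed.

Lemma eq_arrow_is_arrow m n f g : is_arrow m n f -> eq_arrow m f g -> is_arrow m n g.
Proof.
move=> [Hf Hr] E; split=> [i hi|i j hi hj ij k]; first by rewrite -E //; apply: Hf.
by rewrite -!E //; apply: Hr.
Qed.

Lemma idS_arrow m : is_arrow m m (idS m).
Proof. by split=> //; apply: realizable_of => i j k _ _ [<-]. Qed.

Lemma compS_arrow m l n f g : is_arrow m l f -> is_arrow l n g -> is_arrow m n (compS f g).
Proof.
move=> [Hf Rf] [Hg Rg]; split=> [i hi|]; first exact: wf_bindT (Hf i hi) Hg.
apply: realizable_of => i j k hi hj; rewrite !compSE => /bindT_IxP[fi gfi].
rewrite is_verdict_bindT negb_or => /andP[fj gfj] ej.
apply: (realizable_inj Rf hi hj fi fj); apply/esym/(realizable_inj Rg _ _ gfi gfj).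
- by apply: in_range_idx (Hf i hi) _; rewrite fi.
- exact: in_range_idx (Hf j hj) fj.
- by rewrite -ej idx_bindT.
Qed.

(** * The symmetric monoidal structure *)

Lemma tensorS_low m n f g i : i <= m -> tensorS m n f g i = f i.
Proof. by rewrite /tensorS => ->. Qed.

Lemma tensorS_high m n f g i : m < i -> tensorS m n f g i = shiftT n (g (i - m)).
Proof. by move=> h; rewrite /tensorS leqNgt h. Qed.

Lemma sigmaS_low m n i : i <= m -> sigmaS m n i = Ix (n + i).
Proof. by rewrite /sigmaS => ->. Qed.

Lemma sigmaS_high m n i : m < i -> sigmaS m n i = Ix (i - m).
Proof. by move=> h; rewrite /sigmaS leqNgt h. Qed.

Lemma tensorS_arrow m n m' n' f g : is_arrow m n f -> is_arrow m' n' g ->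
  is_arrow (m + m') (n + n') (tensorS m n f g).
Proof.
move=> [Hf Rf] [Hg Rg].
have wf_low i : in_range (m + m') i -> i <= m -> wf_T n (f i).
  by move=> hi im; apply: Hf; in_range_lia.
have wf_high i : in_range (m + m') i -> m < i -> wf_T n' (g (i - m)).
  by move=> hi im; apply: Hg; in_range_lia.
split=> [i hi|].
  case: (leqP i m) => im; [rewrite tensorS_low // | rewrite tensorS_high //].
  + by move: (wf_low i hi im); case: (f i) => //= *; in_range_lia.
  + by move: (wf_high i hi im); case: (g _) => //= *; in_range_lia.
apply: realizable_of => i j k hi hj.
case: (leqP i m) => im; case: (leqP j m) => jm.
- rewrite !tensorS_low // => fi fj ej; apply: (realizable_inj Rf _ _ fi fj ej); in_range_lia.
- rewrite tensorS_low // tensorS_high // shiftT_verdict => fi gj; rewrite idx_shiftT //.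
  move: (wf_low i hi im) (in_range_idx (wf_high j hj jm) gj); rewrite fi /=; in_range_lia.
- rewrite tensorS_high // tensorS_low //.
  case E: (g (i - m)) => [q|||] //= [<-] fj.
  move: (wf_high i hi im) (in_range_idx (wf_low j hj jm) fj); rewrite E /=; in_range_lia.
- rewrite !tensorS_high // shiftT_verdict.
  case E: (g (i - m)) => [q|||] //= [<-] gj; rewrite idx_shiftT // => ej.
  have hi' : in_range m' (i - m) by in_range_lia.
  have hj' : in_range m' (j - m) by in_range_lia.
  have /(realizable_inj Rg hi' hj' E gj) : idx (g (j - m)) = q by lia.
  lia.
Qed.

Lemma sigmaS_arrow m n : is_arrow (m + n) (n + m) (sigmaS m n).
Proof.
split=> [i hi|].
  by rewrite /sigmaS; case: ifP => h /=; in_range_lia.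
apply: realizable_of => i j k hi hj; rewrite /sigmaS.
by case: ifP => h1; case: ifP => h2 /= [<-] _; in_range_lia.
Qed.

Lemma eq_arrow_refl m f : eq_arrow m f f.
Proof. by []. Qed.

Lemma eq_arrow_sym m f g : eq_arrow m f g -> eq_arrow m g f.
Proof. by move=> E i hi; rewrite E. Qed.

Lemma eq_arrow_trans m f g h : eq_arrow m f g -> eq_arrow m g h -> eq_arrow m f h.
Proof. by move=> E1 E2 i hi; rewrite E1 ?E2. Qed.

Lemma eq_arrow_ffun m f g : f =1 g -> eq_arrow m f g.
Proof. by move=> E i _. Qed.

Lemma compS_eq_arrow m l f f' g g' : (forall i, in_range m i -> wf_T l (f i)) ->
  eq_arrow m f f' -> eq_arrow l g g' -> eq_arrow m (compS f g) (compS f' g').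
Proof.
move=> Hf Ef Eg i hi; rewrite !compSE -Ef //; apply: eq_bindT => fi.
exact/Eg/(in_range_idx (Hf i hi)).
Qed.

Lemma idS_compS m f : compS (idS m) f =1 f.
Proof. by []. Qed.

Lemma compS_idS n f : compS f (idS n) =1 f.
Proof. by move=> i; rewrite compSE bindT_Ix. Qed.

Lemma compSA f g h : compS (compS f g) h =1 compS f (compS g h).
Proof. by move=> i; rewrite !compSE bindTA. Qed.

Lemma tensorS_eq_arrow m n m' f f' g g' :
  eq_arrow m f f' -> eq_arrow m' g g' -> eq_arrow (m + m') (tensorS m n f g) (tensorS m n f' g').
Proof.
move=> Ef Eg i hi; rewrite /tensorS; case: ifP => im; first by apply: Ef; in_range_lia.
by congr shiftT; apply: Eg; in_range_lia.
Qed.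

Lemma tensorS_idS m m' : tensorS m m (idS m) (idS m') =1 idS (m + m').
Proof. by move=> i; rewrite /tensorS; case: leqP => //= im; congr Ix; lia. Qed.

Lemma tensorS_compS m l n m' l' f g f' g' :
  (forall i, in_range m i -> wf_T l (f i)) -> (forall i, in_range m' i -> wf_T l' (f' i)) ->
  eq_arrow (m + m') (tensorS m n (compS f g) (compS f' g'))
                    (compS (tensorS m l f f') (tensorS l n g g')).
Proof.
move=> Hf Hf' i hi; case: (leqP i m) => im.
- rewrite !compSE !tensorS_low //; apply: eq_bindT => fi.
  by rewrite tensorS_low //; have := in_range_idx (Hf i ltac:(in_range_lia)) fi; in_range_lia.
- rewrite !compSE !tensorS_high // bindT_shiftT shiftT_bindT; apply: eq_bindT => fi.
  rewrite tensorS_high ?addKn //.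
  by have := in_range_idx (Hf' (i - m) ltac:(in_range_lia)) fi; in_range_lia.
Qed.

Lemma tensorSA m n m' n' f g h :
  tensorS (m + m') (n + n') (tensorS m n f g) h =1 tensorS m n f (tensorS m' n' g h).
Proof.
move=> i; case: (leqP i m) => im; first by rewrite !tensorS_low //; lia.
rewrite (tensorS_high _ _ _ im); case: (leqP i (m + m')) => imm.
  by rewrite tensorS_low // tensorS_high // tensorS_low //; lia.
by rewrite !tensorS_high ?shiftTD ?subnDA //; lia.
Qed.

Lemma tensor0S m f : eq_arrow m (tensorS 0 0 (idS 0) f) f.
Proof. by move=> i hi; rewrite tensorS_high ?subn0 ?shiftT0 //; in_range_lia. Qed.

Lemma tensorS0 m n f : eq_arrow m (tensorS m n f (idS 0)) f.
Proof. by move=> i hi; rewrite tensorS_low //; in_range_lia. Qed.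

Lemma sigmaS_natural m n m' n' f g :
  (forall i, in_range m i -> wf_T n (f i)) -> (forall i, in_range m' i -> wf_T n' (g i)) ->
  eq_arrow (m + m') (compS (tensorS m n f g) (sigmaS n n'))
                    (compS (sigmaS m m') (tensorS m' n' g f)).
Proof.
move=> Hf Hg i hi; rewrite !compSE; case: (leqP i m) => im.
- rewrite tensorS_low // sigmaS_low // /= tensorS_high ?addKn; last by in_range_lia.
  rewrite -bindT_Ix_shift; apply: eq_bindT => fi.
  by rewrite sigmaS_low //; have := in_range_idx (Hf i ltac:(in_range_lia)) fi; in_range_lia.
- rewrite tensorS_high // sigmaS_high //= tensorS_low; last by in_range_lia.
  rewrite bindT_shiftT -[in RHS](bindT_Ix (g (i - m))); apply: eq_bindT => gi.
  rewrite sigmaS_high ?addKn //.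
  by have := in_range_idx (Hg (i - m) ltac:(in_range_lia)) gi; in_range_lia.
Qed.

Lemma sigmaS_invol m n : eq_arrow (m + n) (compS (sigmaS m n) (sigmaS n m)) (idS (m + n)).
Proof.
move=> i hi; rewrite compSE; case: (leqP i m) => im.
- by rewrite sigmaS_low //= sigmaS_high ?addKn //; in_range_lia.
- by rewrite sigmaS_high //= sigmaS_low ?subnKC ?(ltnW im) //; in_range_lia.
Qed.

Lemma sigmaS_hexagon m n p :
  eq_arrow (m + n + p) (sigmaS m (n + p))
    (compS (tensorS (m + n) (n + m) (sigmaS m n) (idS p)) (tensorS n n (idS n) (sigmaS m p))).
Proof.
move=> i hi; rewrite compSE; case: (leqP i m) => im.
  have i0 : n < n + i by in_range_lia.
  rewrite sigmaS_low // tensorS_low ?sigmaS_low //= ?tensorS_high ?addKn ?sigmaS_low //= ?addnA //.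
  exact: leq_trans im (leq_addr _ _).
case: (leqP i (m + n)) => imn.
  by rewrite sigmaS_high // tensorS_low // sigmaS_high //= tensorS_low //; lia.
rewrite sigmaS_high // tensorS_high //= tensorS_high; last lia.
by rewrite sigmaS_high /=; [congr Ix | ]; lia.
Qed.

(** * Running weights along eventually periodic orbits *)

Definition bounded_below (u : nat -> R) : Prop := exists M, forall J, (M <= u J)%R.

Definition linearly_decreasing (u : nat -> R) : Prop :=
  exists A0 c, (c < 0)%R /\ forall J, (u J <= A0 + c * INR J)%R.

Lemma bounded_on_prefix (u : nat -> R) N : exists m M, forall J, J <= N -> (m <= u J <= M)%R.
Proof.
elim: N => [|N [m [M IH]]]; first by exists (u 0), (u 0) => J; rewrite leqn0 => /eqP->; lra.
exists (Rmin m (u N.+1)), (Rmax M (u N.+1)) => J; rewrite leq_eqVlt => /orP[/eqP->|JN].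
  by split; [apply: Rmin_r | apply: Rmax_r].
by have := IH J JN; move: (Rmin_l m (u N.+1)) (Rmax_l M (u N.+1)); lra.
Qed.

Lemma abs_bounded_on_prefix (u : nat -> R) N : exists B, forall J, J <= N -> (Rabs (u J) <= B)%R.
Proof.
have [m [M Hb]] := bounded_on_prefix u N.
exists (Rmax (Rabs m) (Rabs M)) => J JN; apply: Rabs_le; have := Hb J JN.
have := Rle_abs M; have := Rle_abs (- m); rewrite Rabs_Ropp.
have := Rmax_l (Rabs m) (Rabs M); have := Rmax_r (Rabs m) (Rabs M); lra.
Qed.

Lemma bounded_below_tail u N : bounded_below u <-> bounded_below (fun K => u (N + K)).
Proof.
split=> [[M HM]|[M HM]]; first by exists M.
have [m [M' Hm]] := bounded_on_prefix u N.
exists (Rmin m M) => J; case: (leqP J N) => JN.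
- by have := Hm J JN; have := Rmin_l m M; lra.
- by have := HM (J - N); rewrite subnKC ?(ltnW JN) //; have := Rmin_r m M; lra.
Qed.

Lemma bounded_below_near u v B : (forall J, Rabs (u J - v J) <= B)%R ->
  bounded_below u <-> bounded_below v.
Proof.
move=> H; split=> [[M HM]|[M HM]]; exists (M - B)%R => J; have := H J; have := HM J;
  have := Rle_abs (u J - v J); have := Rle_abs (- (u J - v J)); rewrite Rabs_Ropp; lra.
Qed.

Lemma bounded_below_shift u v c : (forall J, u J = c + v J)%R ->
  bounded_below u <-> bounded_below v.
Proof.
move=> H; apply: (bounded_below_near (B := Rabs c)) => J; rewrite H.
have -> : (c + v J - v J = c)%R by lra.
exact: Rle_refl.
Qed.

Lemma periodic_increment_bounded_or_linear (u : nat -> R) a p C : 0 < p ->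
  (forall t, u (a + p + t) = (u (a + t)%nat + C)%R) -> bounded_below u \/ linearly_decreasing u.
Proof.
move=> p0 Hper.
have Hk k r : u (a + r + k * p) = (u (a + r)%nat + INR k * C)%R.
  elim: k => [|k IH]; first by rewrite mul0n addn0 /=; lra.
  have -> : a + r + k.+1 * p = a + p + (r + k * p) by rewrite mulSn; lia.
  by rewrite Hper addnA IH S_INR; lra.
have [m [M Hb]] := bounded_on_prefix u (a + p).
have Hdec J : J < a \/ exists k r, r < p /\ J = a + r + k * p.
  case: (ltnP J a) => aJ; [by left | right].
  exists ((J - a) %/ p), ((J - a) %% p); split; first by rewrite ltn_pmod.
  by have := divn_eq (J - a) p; lia.
case: (Rle_dec 0 C) => C0.
  left; exists m => J; case: (Hdec J) => [Ja|[k [r [rp ->]]]].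
    by have := Hb J ltac:(lia); lra.
  by rewrite Hk; have := Hb (a + r) ltac:(lia); have := pos_INR k; nra.
right; have pR : (0 < INR p)%R by apply/lt_0_INR/ltP.
set c := (C / INR p)%R; have c0 : (c < 0)%R by apply: Rdiv_neg_pos => //; lra.
have Cc : C = (c * INR p)%R by rewrite /c; field; lra.
exists (M - c * INR (a + p))%R, c; split=> // J.
case: (Hdec J) => [Ja|[k [r [rp ->]]]].
  have := Hb J ltac:(lia); have : (INR J <= INR (a + p))%R by apply/le_INR/leP; lia.
  nra.
rewrite Hk Cc; have := Hb (a + r) ltac:(lia); rewrite !plus_INR mult_INR.
have : (INR r < INR p)%R by apply/lt_INR/ltP.
nra.
Qed.

Lemma linearly_decreasing_unbounded (u v : nat -> R) : linearly_decreasing u ->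
  (forall t, exists J, t <= J /\ v t = u J) -> ~ bounded_below v.
Proof.
move=> [A0 [c [c0 Hu]]] Hv [M HM].
have [t /(Rmult_lt_compat_r (- c)) ht] := INR_unbounded ((A0 - M) / (- c)).
have {}ht : (A0 - M < INR t * (- c))%R by move: ht; rewrite /Rdiv Rmult_assoc Rinv_l; lra.
have [J [tJ e]] := Hv t; have : (INR t <= INR J)%R by apply/le_INR/leP.
by have := HM t; rewrite e; have := Hu J; nra.
Qed.

Lemma pigeonhole (h : nat -> nat) L : (forall j, j <= L -> in_range L (h j)) ->
  exists a b, [/\ a < b, b <= L & h a = h b].
Proof.
move=> H; set s := [seq h j | j <- iota 0 L.+1].
have /(uniqPn 0)[a [b [ab]]] : ~~ uniq s.
  apply/negP => us; have : size s <= size (iota 1 L).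
    apply: uniq_leq_size => // y /mapP[j]; rewrite !mem_iota => jL ->.
    by have := H j; in_range_lia.
  by rewrite size_map !size_iota ltnn.
rewrite size_map size_iota => bL.
rewrite !(nth_map 0) ?size_iota ?nth_iota //; try lia.
by exists a, b; split=> //; lia.
Qed.

Lemma orbit_sum_bounded_or_linear L (x : nat -> nat) (u : nat -> R) nx (d : nat -> R) :
  (forall J, in_range L (x J)) -> (forall J, x J.+1 = nx (x J)) ->
  (forall J, u J.+1 = u J + d (x J))%R -> bounded_below u \/ linearly_decreasing u.
Proof.
move=> Hx Hnx Hu; have [a [b [ab _ xab]]] := pigeonhole (fun j _ => Hx j).
have Hper t : x (a + t) = x (b + t).
  by elim: t => [|t IH]; rewrite ?addn0 // !addnS !Hnx IH.
apply: (@periodic_increment_bounded_or_linear u a (b - a) (u b - u a)); first lia.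
rewrite subnKC ?(ltnW ab) //; elim=> [|t IH]; first by rewrite !addn0; lra.
by rewrite !addnS !Hu IH Hper; lra.
Qed.

Lemma LimInf_seq_const_plus_vanishing (c K : R) : LimInf_seq (fun N => c + K / INR N.+1)%R = c.
Proof.
apply/is_LimInf_seq_unique/is_lim_LimInf_seq.
have inv := is_lim_seq_inv _ _ (proj1 (is_lim_seq_incr_1 _ _) is_lim_seq_INR) ltac:(discriminate).
have := is_lim_seq_scal_l _ K _ inv; rewrite /= Rmult_0_r => lim0.
have := is_lim_seq_plus' _ _ c 0%R (is_lim_seq_const c) lim0.
by rewrite Rplus_0_r; apply: is_lim_seq_ext.
Qed.

Lemma LimInf_avg_nonneg (u : nat -> R) (s : nat -> nat) : (forall N, N <= s N) ->
  bounded_below u \/ linearly_decreasing u ->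
  Rbar_le 0%R (LimInf_seq (fun N => u (s N) / INR N.+1)%R) <-> bounded_below u.
Proof.
have N1 N : (0 < INR N.+1)%R by apply/lt_0_INR/ltP.
move=> sN dich; split=> [|[M HM]]; last first.
  rewrite -(LimInf_seq_const_plus_vanishing 0 M); apply: LimInf_le; exists 0 => N _.
  by rewrite Rplus_0_l; apply: Rmult_le_compat_r; [apply/Rlt_le/Rinv_0_lt_compat | ].
case: dich => // [[A0 [c [c0 Hu]]]] H; exfalso.
suff : Rbar_le (LimInf_seq (fun N => u (s N) / INR N.+1)%R) c.
  by move/(Rbar_le_trans _ _ _ H) => /=; lra.
rewrite -(LimInf_seq_const_plus_vanishing c (A0 - c)); apply: LimInf_le.
exists 0 => N _; have -> : (c + (A0 - c) / INR N.+1 = (A0 + c * INR N) / INR N.+1)%R.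
  by rewrite S_INR; field; have := N1 N; rewrite S_INR; lra.
apply: Rmult_le_compat_r; first exact/Rlt_le/Rinv_0_lt_compat.
have : (INR N <= INR (s N))%R by apply/le_INR/leP.
by have := Hu (s N); nra.
Qed.

Section PureCycles.
Variables (M l : nat) (f : nat -> Tv) (x : nat -> nat).
Hypotheses (Hr : realizable M f) (lM : l <= M).
Hypotheses (x0M : in_range M (x 0)) (x0l : ~~ in_range l (x 0)).
Hypotheses (xSl : forall J, in_range l (x J.+1))
  (fx : forall J, ~~ is_verdict (f (x J)) /\ idx (f (x J)) = x J.+1).

Let xM J : in_range M (x J).
Proof. by case: J => // J; apply: in_range_widen lM (xSl J). Qed.

Lemma pure_pred_eq J J' : x J.+1 = x J'.+1 -> ~~ is_weighted (f (x J')) -> x J = x J'.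
Proof.
move=> e pJ'; have [vJ' iJ'] := fx J'.
have fJ' : f (x J') = Ix (x J.+1) by rewrite e -iJ'; case: (f (x J')) vJ' pJ'.
exact/esym/(realizable_inj Hr (xM J') (xM J) fJ' (fx J).1 (fx J).2).
Qed.

Lemma pure_tail_cycle N : (forall J, N <= J -> ~~ is_weighted (f (x J))) ->
  exists p, 0 < p /\ x N = x (N + p).
Proof.
move=> pure.
have back a b : a < b -> x (N + a) = x (N + b) -> x N = x (N + (b - a)).
  elim: a b => [|a IH] [|b] //; first by rewrite addn0 subn0.
  rewrite ltnS !addnS => ab /pure_pred_eq /(_ (pure _ (leq_addr _ _))) /(IH _ ab).
  by rewrite subSS.
have [a [b [ab _ e]]] := pigeonhole (h := fun j => x (N + j).+1) (fun j _ => xSl (N + j)).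
exists (b - a); split; first by rewrite subn_gt0.
by rewrite -subSS; apply: back; rewrite ?addnS.
Qed.

Lemma weighted_infinitely_often N : exists J, N <= J /\ is_weighted (f (x J)).
Proof.
apply: NNPP => none.
have : forall J, N <= J -> ~~ is_weighted (f (x J)).
  by move=> J NJ; apply/negP => w; apply: none; exists J.
elim: N {none} => [|N IH] pure.
  have [[|p] [//= _ e]] := pure_tail_cycle pure.
  by move: x0l; rewrite e xSl.
case w: (is_weighted (f (x N))); last first.
  by apply: IH => J; rewrite leq_eqVlt => /orP[/eqP<-|/pure]; rewrite ?w.
have [p [p0 e]] := pure_tail_cycle pure.
have e' : x N = x (N + p).
  by apply: pure_pred_eq; rewrite -?addSn -?e ?pure //; lia.
by move: w; rewrite e' (negbTE (pure _ _)) //; lia.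
Qed.

End PureCycles.

(** * Feedback walks *)

Definition exited (l : nat) (e : Tv) : bool :=
  match e with Ix k | Wt _ k => ~~ in_range l k | _ => true end.

Definition unshiftT (l : nat) (e : Tv) : Tv :=
  match e with Ix k => Ix (k - l) | Wt r k => Wt r (k - l) | e => e end.

Lemma exited_verdict l e : is_verdict e -> exited l e.
Proof. by case: e. Qed.

Lemma exitedE l e : ~~ is_verdict e -> exited l e = ~~ in_range l (idx e).
Proof. by case: e. Qed.

Lemma not_exitedE l e : ~~ exited l e = ~~ is_verdict e && in_range l (idx e).
Proof. by case: e => //= *; rewrite negbK. Qed.

Lemma exited_bindT l e g : ~~ is_verdict e -> exited l (bindT e g) = exited l (g (idx e)).
Proof. by case: e => [j|r j||] //= _; case: (g j). Qed.

Lemma exited0 e : exited 0 e.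
Proof. by case: e => //= *; in_range_lia. Qed.

Lemma unshiftT_verdict l e : is_verdict e -> unshiftT l e = e.
Proof. by case: e. Qed.

Lemma is_verdict_unshiftT l e : is_verdict (unshiftT l e) = is_verdict e.
Proof. by case: e. Qed.

Lemma idx_unshiftT l e : idx (unshiftT l e) = idx e - l.
Proof. by case: e. Qed.

Lemma weight_unshiftT l e : weight (unshiftT l e) = weight e.
Proof. by case: e. Qed.

Lemma unshiftT0 e : unshiftT 0 e = e.
Proof. by case: e => //= *; rewrite subn0. Qed.

Lemma unshiftT_shiftT l e : unshiftT l (shiftT l e) = e.
Proof. by case: e => //= *; rewrite addKn. Qed.

Lemma unshiftT_shiftTD l n e : unshiftT l (shiftT (l + n) e) = shiftT n e.
Proof. by case: e => //= *; rewrite -addnA addKn. Qed.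

Lemma unshiftTD l l' e : unshiftT l' (unshiftT l e) = unshiftT (l + l') e.
Proof. by case: e => //= *; rewrite subnDA. Qed.

Lemma unshiftT_bindT l e g : is_verdict e || (l <= idx e) ->
  unshiftT l (bindT e g) = bindT (unshiftT l e) (fun q => unshiftT l (g (l + q))).
Proof. by case: e => [j|r j||] //= h; rewrite subnKC //; case: (g j). Qed.

Lemma wf_unshiftT l n e : wf_T (l + n) e -> exited l e -> wf_T n (unshiftT l e).
Proof. by case: e => //= *; in_range_lia. Qed.

Lemma in_range_addl l m i : in_range m i -> in_range (l + m) (l + i) && ~~ in_range l (l + i).
Proof. by move=> *; apply/andP; split; in_range_lia. Qed.

Section Feedback.
Variables (l : nat) (f : nat -> Tv).

Definition fb_step (p : nat) : Tv := if in_range l p then f p else Ix p.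

(* The walk from [p] after [J + 1] steps, with the weight accumulated on the way. *)
Fixpoint fb_iter (p : nat) (J : nat) : Tv :=
  if J is J'.+1 then bindT (fb_iter p J') fb_step else f p.

Lemma fb_iterS_exited p J : exited l (fb_iter p J) -> fb_iter p J.+1 = fb_iter p J.
Proof.
move=> H; apply: bindT_id => fJ; move: H.
by rewrite exitedE // /fb_step => /negbTE->.
Qed.

Lemma fb_iter_exited p J J' : J <= J' -> exited l (fb_iter p J) -> fb_iter p J' = fb_iter p J.
Proof.
move=> /subnKC <- H; elim: (J' - J) => [|d IH]; first by rewrite addn0.
by rewrite addnS fb_iterS_exited IH.
Qed.

Lemma fb_iterS p J : ~~ exited l (fb_iter p J) -> fb_iter p J.+1 = bindT (fb_iter p J) f.
Proof.
by rewrite not_exitedE => /andP[_ hr] /=; apply: eq_bindT => _; rewrite /fb_step hr.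
Qed.

Lemma fb_iter_first_exit p J : exited l (fb_iter p J) ->
  exists J0, [/\ J0 <= J, exited l (fb_iter p J0) & forall s, s < J0 -> ~~ exited l (fb_iter p s)].
Proof.
move=> HJ; have H : exists J, exited l (fb_iter p J) by exists J.
case: (ex_minnP H) => J0 HJ0 Hmin; exists J0; split=> //; first exact: Hmin.
by move=> s hs; apply/negP => /Hmin; rewrite leqNgt hs.
Qed.

Lemma fb_iter_cat p J K : ~~ exited l (fb_iter p J) ->
  fb_iter p (J + K.+1) = bindT (fb_iter p J) (fun y => fb_iter y K).
Proof.
move=> HJ; elim: K => [|K IH]; first by rewrite addn1 fb_iterS.
by rewrite addnS /= IH bindTA.
Qed.

Lemma fb_iter_wf L N p J : l <= L -> (forall q, in_range L q -> wf_T N (f q)) ->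
  in_range L p -> wf_T N (fb_iter p J).
Proof.
move=> lL Hf hp; elim: J => [|J IH] /=; first exact: Hf.
apply: (wf_bindT IH) => j hj; rewrite /fb_step; case: ifP => // /(in_range_widen lL).
exact: Hf.
Qed.

End Feedback.

Lemma psumS a K : psum a K.+1 = (psum a K + a K.+1)%R.
Proof. by []. Qed.

Lemma has_wl_beforeS l f i K :
  has_wl_before l f i K.+1 = has_wl_before l f i K || (0 < K) && tr_wl l f i K.
Proof. by []. Qed.

Lemma tr_walkS l f i J : tr_walk l f i J.+1 =
  if tr_cont l J (tr_walk l f i J)
  then (if tr_walk l f i J is (Ix k | Wt _ k) then f k else tr_walk l f i J)
  else tr_walk l f i J.
Proof. by []. Qed.

#[local] Arguments tr_walk : simpl never.
#[local] Arguments psum : simpl never.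
#[local] Arguments has_wl_before : simpl never.

Section Walk.
Variables (l : nat) (f : nat -> Tv) (i : nat).

Local Notation walk := (tr_walk l f i).

Definition walk_weight : nat -> R := psum (fun j => weight (walk j)).

Definition walk_acc (K : nat) : Tv :=
  match walk K with
  | Ix k => if has_wl_before l f i K then Wt (walk_weight K) k else Ix k
  | Wt _ k => Wt (walk_weight K) k
  | v => v
  end.

Lemma tr_contS j v : tr_cont l j.+1 v = ~~ exited l v.
Proof. by case: v => //= *; rewrite negbK. Qed.

Lemma exited_walk_acc K : exited l (walk_acc K) = exited l (walk K).
Proof. by rewrite /walk_acc; case: (walk K) => //= *; case: has_wl_before. Qed.

Lemma is_verdict_walk_acc K : is_verdict (walk_acc K) = is_verdict (walk K).
Proof. by rewrite /walk_acc; case: (walk K) => //= *; case: has_wl_before. Qed.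

Lemma idx_walk_acc K : idx (walk_acc K) = idx (walk K).
Proof. by rewrite /walk_acc; case: (walk K) => //= *; case: has_wl_before. Qed.

Lemma tr_fin_value_walk_acc K : tr_fin_value l f i K = unshiftT l (walk_acc K).
Proof. by rewrite /tr_fin_value /walk_acc; case: (walk K) => //= *; case: has_wl_before. Qed.

Lemma weight_walk_acc K : ~~ is_verdict (walk_acc K) ->
  (forall k, walk_acc K = Ix k -> walk_weight K = 0%R) -> weight (walk_acc K) = walk_weight K.
Proof.
rewrite /walk_acc; case: (walk K) => [k|r k||] //; case: has_wl_before => //= _ H.
by rewrite (H k).
Qed.

Lemma fb_iter_walk J : (forall s, s < J -> ~~ exited l (fb_iter l f (l + i) s)) ->
  fb_iter l f (l + i) J = walk_acc J.+1 /\
  (forall k, walk_acc J.+1 = Ix k -> walk_weight J.+1 = 0%R).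
Proof.
rewrite /walk_acc /walk_weight; elim: J => [|J IH] Hs.
  rewrite /= psumS /psum /tr_walk /=.
  case: (f (l + i)) => [k|r k||] //=.
  - by split=> // ? _; lra.
  - by rewrite Rplus_0_l; split=> // ? [].
have [IH1 IH2] := IH (fun s hs => Hs s (ltnW hs)).
have := Hs J (ltnSn J); rewrite [fb_iter _ _ _ J.+1]/= IH1.
rewrite (psumS _ J.+1) (has_wl_beforeS _ _ _ J.+1) (tr_walkS _ _ _ J.+1) tr_contS /tr_wl.
move: IH2; case: (walk J.+1) => [k|r k||] H2 Hk //.
- case Hb: (has_wl_before l f i J.+1) in H2 Hk *; rewrite /= in Hk;
    rewrite /= /fb_step (negbNE Hk) /= ?orbF.
  + by case: (f k) => //= *; split=> //; rewrite ?Rplus_0_r.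
  + rewrite (H2 k erefl).
    case: (f k) => [k'|r' k'||] //=; split=> //.
    * by move=> ? _; lra.
    * by rewrite Rplus_0_l.
- rewrite /= in Hk; rewrite /= /fb_step (negbNE Hk) /= orbT.
  by case: (f k) => //= *; split=> //; rewrite ?Rplus_0_r.
Qed.

Lemma tr_stop_fb_iter K J0 : (forall s, s < J0 -> ~~ exited l (fb_iter l f (l + i) s)) ->
  K <= J0.+1 -> tr_stop l f i K = (if K is s.+1 then exited l (fb_iter l f (l + i) s) else false).
Proof.
move=> Hs; case: K => [|s] // hK; rewrite /tr_stop tr_contS negbK.
have [-> _] := fb_iter_walk (J := s) (fun s' hs' => Hs s' (leq_trans hs' hK)).
by rewrite exited_walk_acc.
Qed.

Lemma trace_at_exited J : exited l (fb_iter l f (l + i) J) ->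
  trace_at l f i = unshiftT l (fb_iter l f (l + i) J).
Proof.
move=> /fb_iter_first_exit[J0 [J0J HJ0 Hs]]; rewrite (fb_iter_exited J0J HJ0).
rewrite /trace_at; case: excluded_middle_informative => [H|[]]; last first.
  by exists J0.+1; rewrite (tr_stop_fb_iter (K := J0.+1) Hs).
case: (ex_minnP H) => K HK Hmin.
have -> : K = J0.+1.
  apply/eqP; rewrite eqn_leq Hmin ?(tr_stop_fb_iter (K := J0.+1) Hs) //=.
  rewrite leqNgt; apply/negP => KJ0; move: HK; rewrite (tr_stop_fb_iter Hs (ltnW KJ0)).
  by case: K KJ0 {Hmin} => [|s] //= /Hs /negbTE->.
by rewrite tr_fin_value_walk_acc; have [-> _] := fb_iter_walk Hs.
Qed.

End Walk.

Definition loop_verdict (u : nat -> R) : Tv :=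
  if excluded_middle_informative (bounded_below u) then ExS else FaS.

Lemma loop_verdict_is_verdict u : is_verdict (loop_verdict u).
Proof. by rewrite /loop_verdict; case: excluded_middle_informative. Qed.

Lemma eq_loop_verdict u v : (bounded_below u <-> bounded_below v) ->
  loop_verdict u = loop_verdict v.
Proof.
rewrite /loop_verdict => uv.
case: excluded_middle_informative => bu; case: excluded_middle_informative => bv //.
- by case: bv; apply/uv.
- by case: bu; apply/uv.
Qed.

Lemma fb_iter_bounded_or_linear l f p : (forall J, ~~ exited l (fb_iter l f p J)) ->
  bounded_below (fun J => weight (fb_iter l f p J)) \/
  linearly_decreasing (fun J => weight (fb_iter l f p J)).
Proof.
move=> loop; have live J : ~~ is_verdict (fb_iter l f p J) && in_range l (idx (fb_iter l f p J)).
  by rewrite -not_exitedE.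
apply: (@orbit_sum_bounded_or_linear l (fun J => idx (fb_iter l f p J)) _
                                    (fun y => idx (f y)) (fun y => weight (f y))).
- by move=> J; case/andP: (live J).
- by move=> J; case/andP: (live J) => v _; rewrite fb_iterS ?loop // idx_bindT.
- move=> J; case/andP: (live J.+1) => v _; rewrite fb_iterS ?loop // in v *.
  by rewrite weight_bindT.
Qed.

Lemma next_wl_spec l f i a : (exists j, a <= j /\ tr_wl l f i j) ->
  [/\ a <= next_wl l f i a, tr_wl l f i (next_wl l f i a) &
      forall j, a <= j -> j < next_wl l f i a -> ~~ tr_wl l f i j].
Proof.
move=> [j0 [aj0 wj0]]; rewrite /next_wl; case: excluded_middle_informative => [H|[]]; last first.
  by exists j0; rewrite aj0 wj0.
case: (ex_minnP H) => n /andP[an wn] Hmin; split=> // j aj jn.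
by apply/negP => wj; have := Hmin j; rewrite aj wj => /(_ isT); rewrite leqNgt jn.
Qed.

Lemma psum_gap (w : nat -> R) a b : a < b -> (forall j, a < j -> j < b -> w j = 0%R) ->
  psum w b = (psum w a + w b)%R.
Proof.
elim: b => [|b IH] // ab Hz; rewrite psumS.
case: (ltngtP a b) => [ab'|ba|<-] //.
- by rewrite IH ?(Hz b) //; [lra | move=> j aj jb; apply: Hz => //; apply: ltnW].
- by rewrite ltnS leqNgt ba in ab.
Qed.

Section Looping.
Variables (l m : nat) (f : nat -> Tv) (i : nat).
Hypotheses (Hr : realizable (l + m) f) (hi : in_range m i)
  (loop : forall J, ~~ exited l (fb_iter l f (l + i) J)).

Local Notation walk := (tr_walk l f i).

Lemma walk_looping J :
  [/\ weight (fb_iter l f (l + i) J) = walk_weight l f i J.+1, ~~ is_verdict (walk J.+1),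
      in_range l (idx (walk J.+1)) & walk J.+2 = f (idx (walk J.+1))].
Proof.
have [E1 E2] := fb_iter_walk (J := J) (fun s _ => loop s).
have := loop J; rewrite E1 not_exitedE is_verdict_walk_acc idx_walk_acc => /andP[v r].
split=> //; first by rewrite weight_walk_acc // is_verdict_walk_acc.
by rewrite (tr_walkS _ _ _ J.+1) tr_contS not_exitedE v r; case: (walk J.+1) v.
Qed.

Lemma walk_never_stops K : ~~ tr_stop l f i K.
Proof.
rewrite (tr_stop_fb_iter (J0 := K) (fun s _ => loop s)) //.
by case: K => // K; apply: loop.
Qed.

Lemma walk_weighted_often a : exists j, a <= j /\ tr_wl l f i j.
Proof.
pose x J := idx (walk J).
have fx J : f (x J) = walk J.+1 by case: J => [|J] //; case: (walk_looping J).
have xSl J : in_range l (x J.+1) by case: (walk_looping J).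
have fxv J : ~~ is_verdict (f (x J)) /\ idx (f (x J)) = x J.+1.
  by rewrite fx; case: (walk_looping J).
have /andP[x0 x0l] := in_range_addl l hi.
have [J [aJ w]] := weighted_infinitely_often Hr (leq_addr m l) x0 x0l xSl fxv a.
exists J.+1; split; first exact: leqW.
by move: w; rewrite fx /tr_wl; case: (walk_looping J) => _ _ r _; case: (walk J.+1) r.
Qed.

Lemma weight_walk_not_wl j : ~~ tr_wl l f i j -> weight (walk j) = 0%R.
Proof.
case: j => [|J] //; rewrite /tr_wl; case: (walk_looping J) => _ _ r _.
by case: (walk J.+1) r => //= ? ? ->.
Qed.

Lemma wl_pos_spec t : t < wl_pos l f i t /\ wsum l f i t.+1 = walk_weight l f i (wl_pos l f i t).
Proof.
elim: t => [|t [IH1 IH2]].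
  have [h1 _ h3] := next_wl_spec (walk_weighted_often 1); split=> //.
  rewrite /= /walk_weight (psum_gap (a := 0)) // => j j0 jn.
  by rewrite weight_walk_not_wl ?h3.
have [h1 _ h3] := next_wl_spec (walk_weighted_often (wl_pos l f i t).+1).
split; first exact: leq_ltn_trans IH1 h1.
have -> : wsum l f i t.+2 = (wsum l f i t.+1 + wprime l f i t.+1)%R by [].
rewrite IH2 /walk_weight (psum_gap h1) // => j j0 jn.
by rewrite weight_walk_not_wl ?h3.
Qed.

Lemma wavgE N :
  wavg l f i N = (weight (fb_iter l f (l + i) (wl_pos l f i N).-1) / INR N.+1)%R.
Proof.
rewrite /wavg; have [Npos ->] := wl_pos_spec N.
case: (walk_looping (wl_pos l f i N).-1) => -> _ _ _.
by rewrite prednK //; apply: leq_ltn_trans Npos.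
Qed.

Lemma trace_at_looping : trace_at l f i = loop_verdict (fun J => weight (fb_iter l f (l + i) J)).
Proof.
rewrite /trace_at; case: excluded_middle_informative => [[K]|_].
  by move=> stop; have := walk_never_stops K; rewrite stop.
have sN N : N <= (wl_pos l f i N).-1 by rewrite -ltnS prednK; case: (wl_pos_spec N) => //; lia.
have := LimInf_avg_nonneg sN (fb_iter_bounded_or_linear loop).
rewrite /tr_inf_value /loop_verdict.
have -> : wavg l f i = (fun N => weight (fb_iter l f (l + i) (wl_pos l f i N).-1) / INR N.+1)%R.
  by apply: functional_extensionality => N; apply: wavgE.
move=> iff_bu.
case: excluded_middle_informative => nonneg; case: excluded_middle_informative => bu //.
- by case: bu; apply/iff_bu.
- by case: nonneg; apply/iff_bu.
Qed.

End Looping.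

Variant trace_at_spec l f i : Tv -> Prop :=
| TraceExit J of (forall s, s < J -> ~~ exited l (fb_iter l f (l + i) s))
                & exited l (fb_iter l f (l + i) J) :
    trace_at_spec l f i (unshiftT l (fb_iter l f (l + i) J))
| TraceLoop of (forall J, ~~ exited l (fb_iter l f (l + i) J)) :
    trace_at_spec l f i (loop_verdict (fun J => weight (fb_iter l f (l + i) J))).

Lemma trace_atP l m f i : realizable (l + m) f -> in_range m i ->
  trace_at_spec l f i (trace_at l f i).
Proof.
move=> Hr hi; case: (classic (exists J, exited l (fb_iter l f (l + i) J))) => [[J HJ]|none].
  have [J0 [J0J HJ0 live]] := fb_iter_first_exit HJ.
  by rewrite (trace_at_exited HJ0); constructor.
have loop J : ~~ exited l (fb_iter l f (l + i) J) by apply/negP => HJ; apply: none; exists J.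
by rewrite (trace_at_looping Hr hi loop); constructor.
Qed.

Lemma trace_at_wf l m n f i : is_arrow (l + m) (l + n) f -> in_range m i ->
  wf_T n (trace_at l f i).
Proof.
move=> [Hf Hr] hi; case: (trace_atP Hr hi) => [J _ HJ|_]; last first.
  by rewrite /loop_verdict; case: excluded_middle_informative.
apply: wf_unshiftT HJ; apply: (fb_iter_wf (L := l + m)) (leq_addr _ _) Hf _.
by case/andP: (in_range_addl l hi).
Qed.

Definition is_pure (e : Tv) : bool := if e is Ix _ then true else false.

Definition fb_pos l f p s := if s is s'.+1 then idx (fb_iter l f p s') else p.

Section Backtrack.
Variables (l : nat) (f : nat -> Tv) (p J : nat).
Hypothesis live : forall s, s < J -> ~~ exited l (fb_iter l f p s).

Lemma fb_iter_persist (P : pred Tv) s : (forall e g, P e -> P (bindT e g)) ->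
  s <= J -> P (fb_iter l f p s) -> P (fb_iter l f p J).
Proof.
move=> Pbind /subnKC <-; elim: (J - s) => [|d IH] Ps; first by rewrite addn0.
by rewrite addnS /=; apply/Pbind/IH.
Qed.

Lemma fb_pos_in s : 0 < s -> s <= J -> in_range l (fb_pos l f p s).
Proof. by case: s => // s _ /live; rewrite not_exitedE => /andP[]. Qed.

Lemma fb_pos_steps : ~~ is_verdict (fb_iter l f p J) -> forall s, s <= J ->
  ~~ is_verdict (f (fb_pos l f p s)) /\ idx (f (fb_pos l f p s)) = fb_pos l f p s.+1.
Proof.
move=> vJ s sJ.
have : ~~ is_verdict (fb_iter l f p s).
  by apply: contra vJ; apply: fb_iter_persist => // e g; rewrite is_verdict_bindT => ->.
case: s sJ => [|s] sJ; first by split.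
rewrite fb_iterS ?live // is_verdict_bindT negb_or => /andP[vs v]; split=> //.
by rewrite /fb_pos fb_iterS ?live // idx_bindT.
Qed.

Lemma fb_pos_pure_steps : is_pure (fb_iter l f p J) -> forall s, s <= J ->
  f (fb_pos l f p s) = Ix (fb_pos l f p s.+1).
Proof.
move=> pJ.
have pure s : s <= J -> fb_iter l f p s = Ix (idx (fb_iter l f p s)).
  move=> sJ; have : is_pure (fb_iter l f p s).
    apply: contraLR pJ; apply: (fb_iter_persist (P := fun e => ~~ is_pure e)) => // e g.
    by case: e => //= ? ?; case: (g _).
  by case: (fb_iter l f p s).
case=> [|s] sJ; first exact: pure 0 sJ.
have := pure s.+1 sJ.
by rewrite /fb_pos fb_iterS ?live // (pure s (ltnW sJ)).
Qed.

End Backtrack.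

Lemma realizable_backtrack M f (x y : nat -> nat) K0 K1 : realizable M f ->
  (forall s, s <= K0 -> in_range M (x s)) -> (forall s, s <= K1 -> in_range M (y s)) ->
  (forall s, s <= K0 -> f (x s) = Ix (x s.+1)) ->
  (forall s, s <= K1 -> ~~ is_verdict (f (y s)) /\ idx (f (y s)) = y s.+1) ->
  x K0.+1 = y K1.+1 -> forall t, t <= K0 -> t <= K1 -> x (K0 - t) = y (K1 - t).
Proof.
move=> Hr xM yM fx fy e; elim=> [|t IH] tK0 tK1.
  have [v iy] := fy K1 (leqnn _); rewrite !subn0.
  by apply: (realizable_inj Hr (xM _ (leqnn _)) (yM _ (leqnn _)) (fx _ (leqnn _)) v); rewrite iy.
have [v iy] := fy _ (leq_subr t.+1 K1).
apply: (realizable_inj Hr (xM _ (leq_subr _ _)) (yM _ (leq_subr _ _)) (fx _ (leq_subr _ _)) v).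
rewrite iy; have -> : (K0 - t.+1).+1 = K0 - t by lia.
have -> : (K1 - t.+1).+1 = K1 - t by lia.
by rewrite IH // ltnW.
Qed.

Lemma trace_at_realizable l m n f : is_arrow (l + m) (l + n) f -> realizable m (trace_at l f).
Proof.
move=> [Hf Hr]; apply: realizable_of => i j k hi hj.
have wf q J : in_range m q -> wf_T (l + n) (fb_iter l f (l + q) J).
  move=> hq; apply: (fb_iter_wf (L := l + m)) (leq_addr _ _) Hf _.
  by case/andP: (in_range_addl l hq).
have posM q J : in_range m q -> (forall s, s < J -> ~~ exited l (fb_iter l f (l + q) s)) ->
    forall s, s <= J -> in_range (l + m) (fb_pos l f (l + q) s).
  move=> hq live [|s] sJ; first by case/andP: (in_range_addl l hq).
  exact: in_range_widen (leq_addr m l) (fb_pos_in live _ sJ).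
case: (trace_atP Hr hi) => [J0 live0 HJ0 E|_]; last first.
  by rewrite /loop_verdict; case: excluded_middle_informative.
case: (trace_atP Hr hj) => [J1 live1 HJ1|_]; last by rewrite loop_verdict_is_verdict.
have e0 : fb_iter l f (l + i) J0 = Ix (l + k).
  move: E HJ0 (wf i J0 hi); case: (fb_iter _ _ _ J0) => //= k' [<-] ? ?; congr Ix; in_range_lia.
rewrite is_verdict_unshiftT idx_unshiftT => v1 e1.
have {}e1 : idx (fb_iter l f (l + j) J1) = l + k.
  by move: (in_range_idx (wf j J1 hj) v1) HJ1; rewrite exitedE //; in_range_lia.
have back := realizable_backtrack Hr (posM i _ hi live0) (posM j _ hj live1)
  (fb_pos_pure_steps live0 ltac:(by rewrite e0)) (fb_pos_steps live1 v1)
  ltac:(by rewrite /= e0 e1).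
have [_ il] := andP (in_range_addl l hi); have [_ jl] := andP (in_range_addl l hj).
case: (ltngtP J0 J1) => J01.
- have := back J0 (leqnn _) (ltnW J01); rewrite subnn /= => ei.
  by move: il; rewrite ei (fb_pos_in live1) // ?subn_gt0 ?leq_subr.
- have := back J1 (ltnW J01) (leqnn _); rewrite subnn /= => ej.
  by move: jl; rewrite -ej (fb_pos_in live0) // ?subn_gt0 ?leq_subr.
- have := back J0 (leqnn _) (eq_leq J01); rewrite J01 subnn /=.
  by move=> /eqP; rewrite eqn_add2l => /eqP.
Qed.

(** * The trace axioms *)

Lemma trS_arrow l m n f : is_arrow (l + m) (l + n) f -> is_arrow m n (trS l n f).
Proof. by move=> Af; split=> [i|]; [apply: trace_at_wf Af | apply: trace_at_realizable Af]. Qed.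

Lemma trS_eq_arrow l m n f f' : is_arrow (l + m) (l + n) f -> eq_arrow (l + m) f f' ->
  eq_arrow m (trS l n f) (trS l n f').
Proof.
move=> Af E i hi; have Af' := eq_arrow_is_arrow Af E.
have same : fb_iter l f (l + i) = fb_iter l f' (l + i).
  apply: functional_extensionality; elim=> [|J IH] /=.
    by apply: E; case/andP: (in_range_addl l hi).
  rewrite IH; apply: eq_bindT => _; rewrite /fb_step.
  by case: ifP => // /(in_range_widen (leq_addr m l)); apply: E.
rewrite /trS; case: (trace_atP Af.2 hi) => [J _ HJ|loop].
  by rewrite same (trace_at_exited (J := J)) // -same.
by rewrite same (trace_at_looping Af'.2 hi) // -same.
Qed.

Lemma trS0 m n f : eq_arrow m (trS 0 n f) f.
Proof. by move=> i hi; rewrite /trS (trace_at_exited (J := 0)) ?exited0 ?unshiftT0. Qed.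

Lemma trS_superpose l m n m' n' f g : is_arrow (l + m) (l + n) f ->
  (forall i, in_range m' i -> wf_T n' (g i)) ->
  eq_arrow (m + m') (tensorS m n (trS l n f) g) (trS l (n + n') (tensorS (l + m) (l + n) f g)).
Proof.
move=> Af Hg i hi; case: (leqP i m) => im.
  rewrite tensorS_low //; apply: (trS_eq_arrow Af); last by in_range_lia.
  by move=> x hx; rewrite tensorS_low //; in_range_lia.
have lmi : l + m < l + i by lia.
rewrite tensorS_high // /trS (trace_at_exited (J := 0)) /= tensorS_high ?subnDl //.
  by rewrite unshiftT_shiftTD.
case v: (is_verdict (g (i - m))); first by rewrite exited_verdict ?shiftT_verdict.
rewrite exitedE ?shiftT_verdict ?v // idx_shiftT ?v //.
by have := in_range_idx (Hg (i - m) ltac:(in_range_lia)) (negbT v); in_range_lia.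
Qed.

Lemma trS_yanking l : eq_arrow l (trS l l (sigmaS l l)) (idS l).
Proof.
move=> i hi; have li : l < l + i by in_range_lia.
have il : i <= l by in_range_lia.
rewrite /trS (trace_at_exited (J := 1)) /= sigmaS_high // addKn /= /fb_step hi sigmaS_low //=.
  by rewrite addKn.
by in_range_lia.
Qed.

Section Naturality.
Variables (l m n m' n' : nat) (f g h : nat -> Tv).
Hypotheses (Af : is_arrow (l + m) (l + n) f) (Ag : is_arrow m' m g) (Ah : is_arrow n n' h).

Local Notation G := (tensorS l l (idS l) g).
Local Notation H := (tensorS l l (idS l) h).
Local Notation C := (compS (compS G f) H).

Lemma natural_step y : in_range (l + n) y -> bindT (H y) (fb_step l C) = bindT (fb_step l f y) H.
Proof.
move=> hy; case: (leqP y l) => yl.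
  rewrite tensorS_low //= /fb_step; case: ifP => yr; last by rewrite /= tensorS_low.
  by rewrite !compSE tensorS_low.
rewrite tensorS_high // /fb_step (_ : in_range l y = false) /=; last by in_range_lia.
rewrite tensorS_high //; apply: bindT_id => v.
rewrite (_ : in_range l _ = false) //; rewrite shiftT_verdict in v; rewrite idx_shiftT //.
by have := in_range_idx (Ah.1 (y - l) ltac:(in_range_lia)) v; in_range_lia.
Qed.

Lemma fb_iter_natural i J : in_range m' i ->
  fb_iter l C (l + i) J = bindT (shiftT l (g i)) (fun x => bindT (fb_iter l f x J) H).
Proof.
move=> hi; elim: J => [|J IH].
  by rewrite /= !compSE tensorS_high ?addKn ?bindTA //; in_range_lia.
rewrite /= IH bindTA; apply: eq_bindT => v.
rewrite /= !bindTA; apply: eq_bindT => vJ; apply: natural_step.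
apply: in_range_idx vJ; apply: (fb_iter_wf (L := l + m)) (leq_addr _ _) Af.1 _.
rewrite shiftT_verdict in v; rewrite idx_shiftT //.
by have := in_range_idx (Ag.1 i hi) v; in_range_lia.
Qed.

Lemma natural_exit e : wf_T (l + n) e -> exited l e ->
  exited l (bindT e H) /\ unshiftT l (bindT e H) = bindT (unshiftT l e) h.
Proof.
move=> we xe; case v: (is_verdict e).
  by rewrite !bindT_verdict ?exited_verdict ?unshiftT_verdict.
have le : l < idx e by move: (in_range_idx we (negbT v)) xe; rewrite exitedE ?v //; in_range_lia.
rewrite exited_bindT ?v // unshiftT_bindT; last by rewrite (ltnW le) orbT.
split.
  rewrite tensorS_high //; case vh: (is_verdict (h (idx e - l))).
    by rewrite exited_verdict ?shiftT_verdict.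
  rewrite exitedE ?shiftT_verdict ?vh // idx_shiftT ?vh //.
  have := in_range_idx we (negbT v) => ie.
  by have := in_range_idx (Ah.1 (idx e - l) ltac:(in_range_lia)) (negbT vh); in_range_lia.
apply: eq_bindT => ue; rewrite idx_unshiftT tensorS_high ?addKn ?unshiftT_shiftT //.
by move: ue; rewrite is_verdict_unshiftT; lia.
Qed.

Lemma trS_natural : eq_arrow m' (trS l n' C) (compS (compS g (trS l n f)) h).
Proof.
move=> i hi; rewrite /trS !compSE.
case v: (is_verdict (g i)).
  rewrite (trace_at_exited (J := 0)) fb_iter_natural // ?bindT_shiftT !bindT_verdict //.
  - by rewrite unshiftT_verdict.
  - exact: exited_verdict.
have ha : in_range m (idx (g i)) by exact: in_range_idx (Ag.1 i hi) (negbT v).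
set a := idx (g i) in ha *.
have AC := compS_arrow (compS_arrow (tensorS_arrow (idS_arrow l) Ag) Af)
                       (tensorS_arrow (idS_arrow l) Ah).
have iterC J : fb_iter l C (l + i) J =
    bindT (shiftT l (g i)) (fun=> bindT (fb_iter l f (l + a) J) H).
  by rewrite fb_iter_natural //; apply: eq_bindT => _; rewrite idx_shiftT ?v.
have -> : bindT (bindT (g i) (trace_at l f)) h = bindT (g i) (fun=> bindT (trace_at l f a) h).
  by rewrite bindTA; apply: eq_bindT.
case: (trace_atP Af.2 ha) => [J _ HJ|loop].
  have wJ : wf_T (l + n) (fb_iter l f (l + a) J).
    by apply: (fb_iter_wf (L := l + m)) (leq_addr _ _) Af.1 _; case/andP: (in_range_addl l ha).
  have [xC uC] := natural_exit wJ HJ.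
  rewrite (trace_at_exited (J := J)) iterC; last by rewrite exited_bindT ?shiftT_verdict ?v.
  rewrite unshiftT_bindT ?unshiftT_shiftT ?uC //.
  by rewrite idx_shiftT ?v ?leq_addr ?orbT.
have iterC' J : fb_iter l C (l + i) J = bindT (shiftT l (g i)) (fun=> fb_iter l f (l + a) J).
  rewrite iterC; apply: eq_bindT => _; apply: bindT_id => vJ; rewrite tensorS_low //.
  by move: (loop J); rewrite not_exitedE vJ /=; in_range_lia.
have loopC J : ~~ exited l (fb_iter l C (l + i) J).
  by rewrite iterC' exited_bindT ?shiftT_verdict ?v.
rewrite (trace_at_looping AC.2 hi loopC) (bindT_verdict h (loop_verdict_is_verdict _)).
rewrite bindT_const ?loop_verdict_is_verdict ?v //.
apply/eq_loop_verdict/(bounded_below_shift (c := weight (g i))) => J.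
have := loopC J; rewrite not_exitedE iterC' => /andP[vC _].
by rewrite weight_bindT // weight_shiftT.
Qed.

End Naturality.

Section Dinaturality.
Variables (l l' m n : nat) (f k : nat -> Tv).
Hypotheses (Af : is_arrow (l + m) (l' + n) f) (Ak : is_arrow l' l k).

Local Notation K := (tensorS l' l k (idS n)).
Local Notation L := (compS f K).
Local Notation R := (compS (tensorS l' l k (idS m)) f).

Lemma dinatural_step y : in_range (l' + n) y ->
  bindT (K y) (fb_step l L) = bindT (fb_step l' R y) K.
Proof.
move=> hy; case: (leqP y l') => yl.
  have yr : in_range l' y by in_range_lia.
  rewrite /fb_step yr !compSE !tensorS_low // bindTA; apply: eq_bindT => v.
  by rewrite (in_range_idx (Ak.1 y yr) v).
rewrite (_ : fb_step l' R y = Ix y) /=.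
  by rewrite tensorS_high //= /fb_step (_ : in_range l _ = false) //; in_range_lia.
by rewrite /fb_step (_ : in_range l' y = false) //; in_range_lia.
Qed.

Lemma fb_iter_dinatural i J : in_range m i ->
  fb_iter l L (l + i) J = bindT (fb_iter l' R (l' + i) J) K.
Proof.
move=> hi; have hR : in_range (l' + m) (l' + i) by case/andP: (in_range_addl l' hi).
have AR := compS_arrow (tensorS_arrow Ak (idS_arrow m)) Af.
elim: J => [|J IH] /=.
  by rewrite !compSE tensorS_high ?addKn //; in_range_lia.
rewrite IH !bindTA; apply: eq_bindT => v; apply: dinatural_step.
exact: in_range_idx (fb_iter_wf J (leq_addr _ _) AR.1 hR) v.
Qed.

Lemma dinatural_exit e : wf_T (l' + n) e -> exited l' e ->
  exited l (bindT e K) /\ unshiftT l (bindT e K) = unshiftT l' e.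
Proof.
move=> we xe; case v: (is_verdict e).
  by rewrite bindT_verdict ?exited_verdict ?unshiftT_verdict.
have le : l' < idx e by move: (in_range_idx we (negbT v)) xe; rewrite exitedE ?v //; in_range_lia.
case: e v we xe le => //= [y|r y] _ _ _ le;
  by rewrite tensorS_high //= addKn; split=> //; in_range_lia.
Qed.

Lemma dinatural_loop i : in_range m i -> (forall J, ~~ exited l' (fb_iter l' R (l' + i) J)) ->
  forall J, ~~ exited l (fb_iter l L (l + i) J).
Proof.
move=> hi loop J; apply/negP => xL.
have := loop J; rewrite not_exitedE => /andP[v r].
set y := idx _ in r; have yl : y <= l' by in_range_lia.
have vk : is_verdict (k y).
  move: xL; rewrite fb_iter_dinatural // exited_bindT // tensorS_low //.
  by apply: contraLR => vk; rewrite exitedE // negbK (in_range_idx (Ak.1 y r)).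
move: (loop J.+1); rewrite fb_iterS ?loop // exited_verdict //.
by rewrite is_verdict_bindT compSE tensorS_low // bindT_verdict // vk orbT.
Qed.

Lemma trS_dinatural : eq_arrow m (trS l n L) (trS l' n R).
Proof.
move=> i hi; rewrite /trS.
have AR := compS_arrow (tensorS_arrow Ak (idS_arrow m)) Af.
have AL := compS_arrow Af (tensorS_arrow Ak (idS_arrow n)).
case: (trace_atP AR.2 hi) => [J _ HJ|loop].
  have wJ : wf_T (l' + n) (fb_iter l' R (l' + i) J).
    by apply: (fb_iter_wf J (leq_addr _ _) AR.1); case/andP: (in_range_addl l' hi).
  have [xL uL] := dinatural_exit wJ HJ.
  by rewrite (trace_at_exited (J := J)) fb_iter_dinatural.
rewrite (trace_at_looping AL.2 hi (dinatural_loop hi loop)); apply: eq_loop_verdict.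
have [B HB] := abs_bounded_on_prefix (fun q => weight (k q)) l'.
apply: (bounded_below_near (B := B)) => J.
have := loop J; rewrite not_exitedE => /andP[v r].
have := dinatural_loop hi loop J; rewrite not_exitedE fb_iter_dinatural // => /andP[vL _].
rewrite weight_bindT // tensorS_low; last by in_range_lia.
by rewrite Rplus_minus_l; apply: HB; in_range_lia.
Qed.

End Dinaturality.

Lemma fb_iter_addn l l' f y K : (forall s, s < K -> ~~ exited l (fb_iter l f y s)) ->
  fb_iter (l + l') f y K = fb_iter l f y K.
Proof.
elim: K => [|K IH] //= live; rewrite IH => [|s sK]; last exact/live/ltnW.
apply: eq_bindT => v; have := live K (ltnSn K); rewrite not_exitedE v /= => r.
by rewrite /fb_step r (in_range_widen (leq_addr l' l) r).
Qed.

Section Vanishing.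
Variables (l l' m n : nat) (f : nat -> Tv).
Hypothesis Af : is_arrow (l + l' + m) (l + l' + n) f.

Local Notation g := (trS l (l' + n) f).
Local Notation F y := (fb_iter (l + l') f y).

Let Af' : is_arrow (l + (l' + m)) (l + (l' + n)) f.
Proof. by rewrite !addnA. Qed.

Lemma trace_segment q : in_range (l' + m) q ->
  (exists K, [/\ exited l (F (l + q) K), forall s, s < K -> ~~ exited l (F (l + q) s)
               & g q = unshiftT l (F (l + q) K)]) \/
  ((forall K, ~~ exited l (F (l + q) K)) /\ g q = loop_verdict (fun K => weight (F (l + q) K))).
Proof.
move=> hq; rewrite /trS; case: (trace_atP Af'.2 hq) => [K live xK|loop].
  left; exists K; split; rewrite /= ?fb_iter_addn // => s sK.
  by rewrite fb_iter_addn ?live // => s' s's; apply/live/(ltn_trans s's).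
right; have same K : F (l + q) K = fb_iter l f (l + q) K by rewrite fb_iter_addn.
split=> [K|]; rewrite ?same //; congr loop_verdict.
by apply: functional_extensionality => K; rewrite same.
Qed.

Variable i : nat.
Hypothesis hi : in_range m i.

Local Notation D := (F (l + l' + i)).
Local Notation O := (fb_iter l' g (l' + i)).

Lemma vanish_walk_wf J : wf_T (l + l' + n) (D J).
Proof. by apply: (fb_iter_wf J (leq_addr _ _) Af.1); case/andP: (in_range_addl (l + l') hi). Qed.

(* Each step of the outer walk [O] is a segment of the walk [D] with feedback [l + l'],
   which ends when [D] leaves [[l]]; a segment that never ends makes [O] a verdict. *)
Definition vanish_inv t : Prop :=
  (exists J, [/\ t <= J, exited l (D J) & O t = unshiftT l (D J)]) \/
  [/\ is_verdict (O t), exists J0, (forall J, J0 <= J -> ~~ exited l (D J))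
    & O t = loop_verdict (fun J => weight (D J))].

Lemma vanish_inv0 : vanish_inv 0.
Proof.
have hq : in_range (l' + m) (l' + i) by case/andP: (in_range_addl l' hi).
rewrite /vanish_inv -addnA.
case: (trace_segment hq) => [[K [xK _ e]]|[loop e]]; first by left; exists K.
by right; split; [rewrite /= e loop_verdict_is_verdict | exists 0 | ].
Qed.

Lemma vanish_invS t : vanish_inv t -> vanish_inv t.+1.
Proof.
rewrite /vanish_inv; case=> [[J [tJ xJ eO]]|[vO [J0 live] eO]]; last first.
  by right; rewrite fb_iterS_exited ?exited_verdict //; split=> //; exists J0.
have wJ := vanish_walk_wf J.
have stable : exited (l + l') (D J) ->
    exists J', [/\ t.+1 <= J', exited l (D J') & O t.+1 = unshiftT l (D J')].
  move=> xJ'; exists J.+1; rewrite !fb_iterS_exited // eO.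
  rewrite /exited; case: (D J) wJ xJ' => //= *; in_range_lia.
case vD: (is_verdict (D J)); first by left; apply/stable/exited_verdict.
have lD : l < idx (D J).
  by move: (in_range_idx wJ (negbT vD)) xJ; rewrite exitedE ?vD //; in_range_lia.
case: (leqP (idx (D J)) (l + l')) => Dll'; last first.
  by left; apply: stable; rewrite exitedE ?vD //; in_range_lia.
set q := idx (D J) - l.
have hq : in_range l' q by in_range_lia.
have eq : l + q = idx (D J) by rewrite subnKC // ltnW.
have eOS : O t.+1 = bindT (O t) (fun=> g q).
  by rewrite /= eO; apply: eq_bindT => _; rewrite idx_unshiftT /fb_step hq.
have liveJ : ~~ exited (l + l') (D J) by rewrite exitedE ?vD //; in_range_lia.
have eDS K : D (J + K.+1) = bindT (D J) (fun=> F (l + q) K).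
  by rewrite fb_iter_cat //; apply: eq_bindT => _; rewrite eq.
case: (trace_segment (in_range_widen (leq_addr _ _) hq)) => [[K [xK _ e]]|[loop e]].
  left; exists (J + K.+1); split; first lia.
    by rewrite eDS exited_bindT ?vD.
  by rewrite eOS eO e eDS unshiftT_bindT ?(ltnW lD) ?orbT.
have vg : is_verdict (g q) by rewrite e loop_verdict_is_verdict.
right; split; first by rewrite eOS bindT_const // eO is_verdict_unshiftT vD.
  exists J.+1 => J' JJ'.
  by rewrite -(subnKC JJ') addSnnS eDS exited_bindT ?vD.
rewrite eOS bindT_const ?eO ?is_verdict_unshiftT ?vD // e; apply: eq_loop_verdict.
rewrite [X in _ <-> X](bounded_below_tail _ J.+1).
apply: (bounded_below_shift (c := - weight (D J))%R) => K.
rewrite addSnnS eDS weight_bindT; first lra.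
by rewrite is_verdict_bindT vD /=; move: (loop K); rewrite not_exitedE => /andP[].
Qed.

Lemma vanish_inv_all t : vanish_inv t.
Proof. by elim: t => [|t IH]; [exact: vanish_inv0 | exact: vanish_invS]. Qed.

Lemma vanish_exited J : exited (l + l') (D J) -> trace_at (l + l') f i = trace_at l' g i.
Proof.
move=> xJ; have xlJ : exited l (D J).
  by move: xJ; rewrite /exited; case: (D J) => //= *; in_range_lia.
case: (vanish_inv_all J) => [[J' [JJ' _ eO]]|[_ [J0 live] _]]; last first.
  by have := live (maxn J J0) (leq_maxr _ _); rewrite (fb_iter_exited (leq_maxl _ _) xJ) xlJ.
rewrite (fb_iter_exited JJ' xJ) in eO.
rewrite (trace_at_exited xJ) (trace_at_exited (J := J)) eO ?unshiftTD //.
move: (vanish_walk_wf J) xJ; rewrite /exited /unshiftT; case: (D J) => //= *; in_range_lia.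
Qed.

Lemma vanish_looping : (forall J, ~~ exited (l + l') (D J)) ->
  trace_at (l + l') f i = trace_at l' g i.
Proof.
move=> loop; rewrite (trace_at_looping Af.2 hi loop).
have Ag : is_arrow (l' + m) (l' + n) g := trS_arrow Af'.
have xD J : ~~ is_verdict (D J) && in_range (l + l') (idx (D J)) by rewrite -not_exitedE.
case: (classic (exists t, is_verdict (O t))) => [[t vt]|noverdict].
  case: (vanish_inv_all t) => [[J [_ _ eO]]|[_ _ eO]].
    by move: vt (xD J); rewrite eO is_verdict_unshiftT => ->.
  by rewrite (trace_at_exited (J := t)) ?exited_verdict // unshiftT_verdict.
have segment t : exists J, [/\ t <= J, ~~ is_verdict (D J), in_range l' (idx (O t))
                            & O t = unshiftT l (D J)].
  case: (vanish_inv_all t) => [[J [tJ xJ eO]]|[vt _ _]]; last by case: noverdict; exists t.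
  have /andP[vJ rJ] := xD J; exists J; split=> //.
  by move: xJ; rewrite eO idx_unshiftT exitedE //; in_range_lia.
have loopO t : ~~ exited l' (O t).
  by have [J [_ vJ rt eO]] := segment t; rewrite not_exitedE rt eO is_verdict_unshiftT vJ.
rewrite (trace_at_looping Ag.2 hi loopO); apply: eq_loop_verdict; split=> [[M HM]|bO].
  by exists M => t; have [J [_ _ _ ->]] := segment t; rewrite weight_unshiftT.
case: (fb_iter_bounded_or_linear loop) => // lin; case: (linearly_decreasing_unbounded lin _ bO).
by move=> t; have [J [tJ _ _ ->]] := segment t; exists J; rewrite weight_unshiftT.
Qed.

End Vanishing.

Lemma trS_vanish l l' m n f : is_arrow (l + l' + m) (l + l' + n) f ->
  eq_arrow m (trS (l + l') n f) (trS l' n (trS l (l' + n) f)).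
Proof.
move=> Af i hi; rewrite {1 2}/trS.
case: (classic (exists J, exited (l + l') (fb_iter (l + l') f (l + l' + i) J))) => [[J]|none].
  exact: (vanish_exited Af hi).
by apply: (vanish_looping Af hi) => J; apply/negP => xJ; apply: none; exists J.
Qed.

Theorem propositionD2 :
  is_traced_smc is_arrow eq_arrow idS compS tensorS sigmaS trS.
Proof.
split.
- exact: eq_arrow_refl.
- exact: eq_arrow_sym.
- exact: eq_arrow_trans.
- exact: eq_arrow_is_arrow.
- exact: idS_arrow.
- exact: compS_arrow.
- by move=> m l n f f' g g' [Hf _] _; apply: compS_eq_arrow.
- by move=> m n f _; apply/eq_arrow_ffun/idS_compS.
- by move=> m n f _; apply/eq_arrow_ffun/compS_idS.
- by move=> *; apply/eq_arrow_ffun/compSA.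
- exact: tensorS_arrow.
- by move=> *; apply: tensorS_eq_arrow.
- by move=> m m'; apply/eq_arrow_ffun/tensorS_idS.
- by move=> m l n m' l' n' f g f' g' [Hf _] _ [Hf' _] _; apply: tensorS_compS Hf Hf'.
- by move=> *; apply: eq_arrow_ffun; apply: tensorSA.
- by move=> *; apply: tensor0S.
- by move=> *; apply: tensorS0.
- exact: sigmaS_arrow.
- by move=> m n m' n' f g [Hf _] [Hg _]; apply: sigmaS_natural.
- exact: sigmaS_invol.
- exact: sigmaS_hexagon.
- exact: trS_arrow.
- exact: trS_eq_arrow.
- exact: trS_natural.
- exact: trS_dinatural.
- by move=> *; apply: trS0.
- exact: trS_vanish.
- by move=> l m n m' n' f g Af [Hg _]; apply: trS_superpose.
- exact: trS_yanking.
Qed.
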